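(* Let $d,K,L,M,N\in\mathbb N$ and let $w_{k,l,m},x_{k,l,n}\in\mathbb R^d$ for $k\in[K],l\in[L],m\in[M],n\in[N]$. Suppose that for all $k\in[K]$, $$\sum_{j=1}^k\Big(\sum_{(l,m,n)\in[L]\times[M]\times[N]}|w_{k,l,m}^Tx_{j,l,n}|\Big)^2\le\beta,\qquad\sum_{l=1}^L\sum_{m=1}^M\|w_{k,l,m}\|_1\le G_w,\qquad\sum_{l=1}^L\sum_{n=1}^N\|x_{k,l,n}\|_1\le G_x,$$ with $G_w,G_x>0$. Then for any $\lambda>0$, $$\sum_{k=1}^K\sum_{(l,m,n)\in[L]\times[M]\times[N]}|w_{k,l,m}^Tx_{k,l,n}|\le\sqrt{(\lambda+\beta)\,dLMK\log\Big(1+\frac{MG_w^2G_x^2K}{dL\lambda}\Big)}.$$ *)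

From HB Require Import structures.
From mathcomp Require Import all_boot all_order all_algebra.
From mathcomp Require Import all_classical all_reals all_analysis.
Set Implicit Arguments. Unset Strict Implicit. Unset Printing Implicit Defensive.
Import Order.TTheory GRing.Theory Num.Theory.
Local Open Scope ring_scope.

Definition dotv (R : realType) (d : nat) (u v : 'rV[R]_d) : R :=
  \sum_(i < d) u 0 i * v 0 i.

Definition norm1 (R : realType) (d : nat) (u : 'rV[R]_d) : R :=
  \sum_(i < d) `|u 0 i|.

From HB Require Import structures.
From mathcomp Require Import all_boot all_order all_algebra.
From mathcomp Require Import all_classical all_reals all_analysis.
From mathcomp Require Import ring lra.
Import Order.TTheory GRing.Theory Num.Theory.
Set Implicit Arguments. Unset Strict Implicit.
Local Open Scope ring_scope.

(* Fix (l, m) and put y_k := sum_n sgn(w_{k,l,m}^T x_{k,l,n}) x_{k,l,n}, so that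
   w_{k,l,m}^T y_k = sum_n |w_{k,l,m}^T x_{k,l,n}|, and consider the regularized
   Gram matrices V_k := mu I + sum_{j <= k} y_j^T y_j with mu := lambda / G_w^2.
   Cauchy-Schwarz for the inner product of V_k bounds w^T y_k by
   sqrt(w^T V_k w) * sqrt(y_k^T V_k^-1 y_k).  Summed over (l, m), the first
   factor is at most lambda + beta by the hypotheses on beta and G_w.  The
   second is the elliptical potential: by the matrix determinant lemma
   y_k^T V_k^-1 y_k <= ln det V_k - ln det V_{k-1}, so the sum over k telescopes,
   and ln det V_K <= d ln (tr V_K / d) (AM-GM for the eigenvalues, proved by
   induction on Schur complements) with tr V_K controlled by G_x.  A final
   Cauchy-Schwarz over (k, l, m) and the concavity of ln in l give the bound. *)

Lemma ln_le_subr1 (R : realType) (x : R) : 0 < x -> ln x <= x - 1.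
Proof.
move=> x0; have := @le_ln1Dx R (x - 1); rewrite addrCA subrr addr0.
by apply; lra.
Qed.

Lemma ln_amgm (R : realType) (a t : R) (n : nat) : 0 < a -> 0 < t -> (0 < n)%N ->
  ln a + n%:R * ln (t / n%:R) <= n.+1%:R * ln ((a + t) / n.+1%:R).
Proof.
move=> a0 t0 n0; have nR : 0 < n%:R :> R by rewrite ltr0n.
set m := (a + t) / n.+1%:R.
have m0 : 0 < m by rewrite divr_gt0 ?ltr0n ?addr_gt0.
(* the tangent bound ln z <= z - 1 at z = a / m and at z = (t / n) / m *)
have h1 := ln_le_subr1 (divr_gt0 a0 m0).
have h2 := ln_le_subr1 (divr_gt0 (divr_gt0 t0 nR) m0).
rewrite ln_div ?posrE // in h1; rewrite ln_div ?posrE ?(divr_gt0 t0 nR) // in h2.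
have h3 : n%:R * (ln (t / n%:R) - ln m) <= n%:R * (t / n%:R / m - 1).
  by rewrite ler_pM2l.
have e : a / m + n%:R * (t / n%:R / m - 1) - 1 = 0.
  rewrite /m; field.
  by apply/and3P; split; apply/lt0r_neq0; rewrite ?addr_gt0 ?ltr0n.
rewrite -[n.+1%:R]natr1; lra.
Qed.

Lemma sum_ln1D_le (R : realType) L (t : 'I_L -> R) : (0 < L)%N ->
  (forall l, 0 <= t l) ->
  \sum_l ln (1 + t l) <= L%:R * ln (1 + (\sum_l t l) / L%:R).
Proof.
move=> L0 ht; have LR : 0 < L%:R :> R by rewrite ltr0n.
set S := \sum_l t l; have S0 : 0 <= S by rewrite sumr_ge0.
set m := 1 + S / L%:R.
have m0 : 0 < m by rewrite /m ltr_pwDl // divr_ge0 // ltW.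
have h : \sum_l (ln (1 + t l) - ln m) <= \sum_l ((1 + t l) / m - 1).
  apply: ler_sum => l _; have tl : 0 < 1 + t l by rewrite ltr_pwDl.
  by rewrite -ln_div ?posrE //; apply: ln_le_subr1; rewrite divr_gt0.
move: h; rewrite !sumrB -mulr_suml big_split /= !sumr_const card_ord -/S.
have -> : (L%:R + S) / m = L%:R.
  rewrite /m; field; rewrite ?lt0r_neq0 //.
  by apply: (lt_le_trans LR); rewrite lerDl.
rewrite -mulr_natl; lra.
Qed.

Lemma ler_sqrtr_sqr (R : rcfType) (x y : R) : 0 <= x -> x ^+ 2 <= y ->
  x <= Num.sqrt y.
Proof. by move=> x0 h; rewrite -(ger0_norm x0) -sqrtr_sqr ler_wsqrtr. Qed.

Lemma sqrtrM_addr_le (R : rcfType) (a b c e : R) :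
  0 <= a -> 0 <= b -> 0 <= c -> 0 <= e ->
  Num.sqrt a * Num.sqrt b + Num.sqrt c * Num.sqrt e <=
  Num.sqrt (a + c) * Num.sqrt (b + e).
Proof.
move=> a0 b0 c0 e0; rewrite -[X in _ <= X]sqrtrM ?addr_ge0 //.
apply: ler_sqrtr_sqr; first by rewrite addr_ge0 // mulr_ge0 // sqrtr_ge0.
have := sqr_sqrtr a0; have := sqr_sqrtr b0; have := sqr_sqrtr c0.
have := sqr_sqrtr e0; have := sqr_ge0 (Num.sqrt a * Num.sqrt e - Num.sqrt c * Num.sqrt b).
set p := Num.sqrt a; set q := Num.sqrt b; set r := Num.sqrt c; set s := Num.sqrt e.
by move=> h <- <- <- <-; nra.
Qed.

Lemma sumr_le_sqrtrM (R : rcfType) (I : finType) (f a b : I -> R) :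
  (forall i, f i <= Num.sqrt (a i) * Num.sqrt (b i)) ->
  (forall i, 0 <= a i) -> (forall i, 0 <= b i) ->
  \sum_i f i <= Num.sqrt (\sum_i a i) * Num.sqrt (\sum_i b i).
Proof.
move=> hf ha hb.
pose P (s A B : R) := [/\ s <= Num.sqrt A * Num.sqrt B, 0 <= A & 0 <= B].
suff [] : P (\sum_i f i) (\sum_i a i) (\sum_i b i) by [].
apply: (big_rec3 P); first by rewrite /P sqrtr0 mulr0 lexx.
move=> i s A B _ [h1 h2 h3]; split; rewrite ?addr_ge0 //.
exact: le_trans (lerD (hf i) h1) (sqrtrM_addr_le _ _ h2 h3).
Qed.

Lemma sumr_sqr_le (R : numDomainType) (I : finType) (f : I -> R) :
  (forall i, 0 <= f i) -> \sum_i f i ^+ 2 <= (\sum_i f i) ^+ 2.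
Proof.
move=> hf; pose P (A B : R) := A <= B ^+ 2 /\ 0 <= B.
suff [] : P (\sum_i f i ^+ 2) (\sum_i f i) by [].
apply: (big_rec2 P); first by rewrite /P expr0n lexx.
move=> i A B _ [h1 h2]; split; last by rewrite addr_ge0.
rewrite sqrrD -addrA lerD2l (le_trans h1) // lerDr.
by rewrite mulrn_wge0 // mulr_ge0.
Qed.

Lemma sumr_sqr_le2 (R : numDomainType) (I J : finType) (f : I -> J -> R) :
  (forall i j, 0 <= f i j) -> \sum_i \sum_j f i j ^+ 2 <= (\sum_i \sum_j f i j) ^+ 2.
Proof.
move=> hf; apply: le_trans (sumr_sqr_le _); last by move=> i; rewrite sumr_ge0.
by apply: ler_sum => i _; apply: sumr_sqr_le.
Qed.

Lemma addmxE (R : nmodType) m n (A B : 'M[R]_(m, n)) i j :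
  (A + B) i j = A i j + B i j.
Proof. by rewrite mxE. Qed.

Lemma oppmxE (R : zmodType) m n (A : 'M[R]_(m, n)) i j : (- A) i j = - A i j.
Proof. by rewrite mxE. Qed.

Lemma scalemxE (R : pzRingType) m n (a : R) (A : 'M[R]_(m, n)) i j :
  (a *: A) i j = a * A i j.
Proof. by rewrite mxE. Qed.

Lemma trmxE (R : Type) m n (A : 'M[R]_(m, n)) i j : A^T i j = A j i.
Proof. by rewrite mxE. Qed.

Lemma mulmx11E (R : pzSemiRingType) (A B : 'M[R]_1) : (A *m B) 0 0 = A 0 0 * B 0 0.
Proof. by rewrite mxE big_ord1. Qed.

Lemma mulmx_trmx00 (R : pzSemiRingType) n (u : 'rV[R]_n) :
  (u *m u^T) 0 0 = \sum_i u 0 i ^+ 2.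
Proof. by rewrite mxE; apply: eq_bigr => i _; rewrite mxE expr2. Qed.

Lemma form_rank1 (R : comPzRingType) n (u y : 'rV[R]_n) :
  (u *m (y^T *m y) *m u^T) 0 0 = (u *m y^T) 0 0 ^+ 2.
Proof.
rewrite !mulmxA -mulmxA mulmx11E.
have -> : y *m u^T = (u *m y^T)^T by rewrite trmx_mul trmxK.
by rewrite trmxE -expr2.
Qed.

Lemma form_sym (R : comPzRingType) n (A : 'M[R]_n) (u v : 'rV[R]_n) :
  A^T = A -> (v *m A *m u^T) 0 0 = (u *m A *m v^T) 0 0.
Proof.
move=> sA; rewrite -[LHS]trmxE.
by rewrite !trmx_mul trmxK sA mulmxA.
Qed.

(** * Determinant identities *)

Lemma det_1_addmul (R : comPzRingType) n (u : 'cV[R]_n) (v : 'rV[R]_n) :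
  \det (1%:M + u *m v) = 1 + (v *m u) 0 0.
Proof.
(* the two block triangular factorizations of [[1, -v], [u, 1]] *)
have E1 : block_mx (1%:M : 'M[R]_1) (- v) u 1%:M =
    block_mx 1%:M 0 u 1%:M *m block_mx 1%:M (- v) 0 (1%:M + u *m v).
  rewrite mulmx_block ?mul1mx ?mul0mx ?mulmx1 ?mulmx0 ?addr0 ?add0r.
  by rewrite mulmxN (addrC 1%:M) addKr.
have E2 : block_mx (1%:M : 'M[R]_1) (- v) u 1%:M =
    block_mx (1%:M + v *m u) (- v) 0 1%:M *m block_mx 1%:M 0 u 1%:M.
  rewrite mulmx_block ?mul1mx ?mul0mx ?mulmx1 ?mulmx0 ?addr0 ?add0r.
  by rewrite mulNmx addrK.
have := congr1 determinant E1; rewrite E2 !det_mulmx.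
rewrite ?det_ublock ?det_lblock ?det1 ?mul1r ?mulr1.
by rewrite det_mx11 !mxE eqxx => <-.
Qed.

Lemma det_addmul (R : comUnitRingType) n (A : 'M[R]_n) (u : 'cV[R]_n) (v : 'rV[R]_n) :
  A \in unitmx -> \det (A + u *m v) = \det A * (1 + (v *m invmx A *m u) 0 0).
Proof.
move=> uA.
have -> : A + u *m v = A *m (1%:M + (invmx A *m u) *m v).
  by rewrite mulmxDr mulmx1 !mulmxA mulmxV // mul1mx.
by rewrite det_mulmx det_1_addmul mulmxA.
Qed.

Definition schur_compl (R : fieldType) n (A : 'M[R]_(1 + n)) : 'M[R]_n :=
  drsubmx A - dlsubmx A *m ((ulsubmx A 0 0)^-1 *: ursubmx A).

Lemma det_schur_compl (R : fieldType) n (A : 'M[R]_(1 + n)) :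
  ulsubmx A 0 0 != 0 -> \det A = ulsubmx A 0 0 * \det (schur_compl A).
Proof.
move=> a0; set a := ulsubmx A 0 0.
have E : A = block_mx 1%:M 0 (a^-1 *: dlsubmx A) 1%:M *m
             block_mx (ulsubmx A) (ursubmx A) 0 (schur_compl A).
  rewrite mulmx_block ?mul1mx ?mul0mx ?mulmx1 ?mulmx0 ?addr0 ?add0r.
  rewrite [ulsubmx A]mx11_scalar -/a mul_mx_scalar scalerA mulfV // scale1r.
  rewrite /schur_compl -/a -scalemxAl scalemxAr addrC subrK.
  by rewrite /a -mx11_scalar submxK.
by rewrite {1}E det_mulmx det_lblock det_ublock !det1 !mul1r det_mx11.
Qed.

(** * Positive definite matrices *)

Definition posdef (R : numDomainType) n (A : 'M[R]_n) :=
  A^T = A /\ forall u : 'rV_n, u != 0 -> 0 < (u *m A *m u^T) 0 0.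

Section PosDef.
Variable R : realFieldType.

Lemma posdef_form_ge0 n (A : 'M[R]_n) (u : 'rV[R]_n) :
  posdef A -> 0 <= (u *m A *m u^T) 0 0.
Proof.
case=> _ pA; have [->|u0] := eqVneq u 0; last exact/ltW/pA.
by rewrite !mul0mx mxE.
Qed.

Lemma posdef_diag_gt0 n (A : 'M[R]_n) i : posdef A -> 0 < A i i.
Proof.
case=> _ pA; have := pA (delta_mx 0 i).
rewrite -rowE trmx_delta -colE !mxE; apply.
apply/eqP=> /matrixP /(_ 0 i); rewrite !mxE !eqxx /=.
by move/eqP; rewrite oner_eq0.
Qed.

Lemma posdef_mxtrace_gt0 n (A : 'M[R]_n) : (0 < n)%N -> posdef A -> 0 < \tr A.
Proof.
case: n A => // n A _ hA; rewrite /mxtrace (bigD1 ord0) //=.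
rewrite ltr_pwDl ?posdef_diag_gt0 // sumr_ge0 // => i _.
exact/ltW/posdef_diag_gt0.
Qed.

Lemma posdef_add_rank1 n (V : 'M[R]_n) (y : 'rV[R]_n) :
  posdef V -> posdef (V + y^T *m y).
Proof.
case=> sV pV; split; first by rewrite [LHS]raddfD /= sV trmx_mul trmxK.
move=> u u0; rewrite mulmxDr mulmxDl addmxE form_rank1.
by apply: lt_le_trans (pV u u0) _; rewrite lerDl sqr_ge0.
Qed.

Lemma posdef_cauchy_schwarz n (A : 'M[R]_n) (u v : 'rV[R]_n) : posdef A ->
  (u *m A *m v^T) 0 0 ^+ 2 <= (u *m A *m u^T) 0 0 * (v *m A *m v^T) 0 0.
Proof.
move=> hA; have [sA pA] := hA.
have [->|v0] := eqVneq v 0.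
  by rewrite trmx0 !mulmx0 !mxE expr0n mulr0.
have p0 := pA v v0.
set a := (u *m A *m u^T) 0 0 in p0 *; set p := (v *m A *m v^T) 0 0 in p0 *.
set q := (u *m A *m v^T) 0 0.
(* expand the nonnegative form at u - (q / p) v *)
have := posdef_form_ge0 (u - (q / p) *: v) hA.
have -> : (u - (q / p) *: v)^T = u^T - (q / p) *: v^T.
  by rewrite [LHS]raddfB /= [(_ *: v)^T]linearZ.
rewrite !mulmxBl !mulmxBr -!scalemxAl -!scalemxAr.
rewrite !(addmxE, oppmxE, scalemxE) (form_sym u v sA) -/a -/p -/q => h.
have tp : q / p * p = q by rewrite divfK ?lt0r_neq0.
move: h; set t := q / p in tp *; rewrite -tp; nra.
Qed.

Lemma posdef_unitmx n (A : 'M[R]_n) : posdef A -> A \in unitmx.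
Proof.
move=> hA; rewrite unitmxE unitfE; apply/eqP=> /eqP /det0P [u u0 uA].
have := proj2 hA u u0; rewrite uA mul0mx mxE; by rewrite ltxx.
Qed.

Lemma form_invmx n (A : 'M[R]_n) (y : 'rV[R]_n) : posdef A ->
  (y *m invmx A) *m A *m (y *m invmx A)^T = y *m invmx A *m y^T.
Proof.
move=> hA; have uA := posdef_unitmx hA; have [sA _] := hA.
rewrite -(mulmxA y) mulVmx // mulmx1 trmx_mul trmx_inv sA.
by rewrite mulmxA.
Qed.

Lemma posdef_invmx_form_ge0 n (A : 'M[R]_n) (y : 'rV[R]_n) :
  posdef A -> 0 <= (y *m invmx A *m y^T) 0 0.
Proof. by move=> hA; rewrite -form_invmx // posdef_form_ge0. Qed.

Lemma posdef_dot_sqr_le n (A : 'M[R]_n) (u y : 'rV[R]_n) : posdef A ->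
  (u *m y^T) 0 0 ^+ 2 <= (u *m A *m u^T) 0 0 * (y *m invmx A *m y^T) 0 0.
Proof.
move=> hA; have uA := posdef_unitmx hA; have [sA _] := hA.
have -> : u *m y^T = u *m A *m (y *m invmx A)^T.
  rewrite trmx_mul trmx_inv sA !mulmxA -(mulmxA u A) mulmxV //.
  by rewrite mulmx1.
by rewrite -form_invmx //; apply: posdef_cauchy_schwarz.
Qed.

Lemma posdef_ulsubmx_gt0 n (A : 'M[R]_(1 + n)) : posdef A -> 0 < ulsubmx A 0 0.
Proof. by move=> hA; rewrite !mxE; apply: posdef_diag_gt0. Qed.

Lemma posdef_schur_compl n (A : 'M[R]_(1 + n)) :
  posdef A -> posdef (schur_compl A).
Proof.
move=> hA; have [sA pA] := hA; have a0 := posdef_ulsubmx_gt0 hA.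
set a := ulsubmx A 0 0 in a0 *.
have Ec : dlsubmx A = (ursubmx A)^T by rewrite trmx_ursub sA.
have EC : (drsubmx A)^T = drsubmx A by rewrite trmx_drsub sA.
split.
  rewrite /schur_compl linearB /= trmx_mul linearZ /= EC Ec trmxK.
  by rewrite -scalemxAl scalemxAr.
move=> u u0.
(* test positivity of A on the vector (-(u c) / a, u), with c := dlsubmx A *)
have nz : row_mx (- a^-1 *: (u *m dlsubmx A)) u != 0.
  by apply/eqP; rewrite -row_mx0 => /eq_row_mx [_ /eqP]; apply/negP.
have := pA _ nz.
rewrite -[A in _ *m A *m _]submxK mul_row_block tr_row_mx mul_row_col.
rewrite [ulsubmx A]mx11_scalar -/a mul_mx_scalar scalerA mulrN mulfV ?lt0r_neq0 //.
rewrite scaleN1r addNr mul0mx add0r.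
rewrite /schur_compl mulmxBr mulmxBl -!scalemxAl -!scalemxAr !mulmxA.
by rewrite -/a mulmxDl scaleNr mulNmx addrC.
Qed.

Lemma mxtrace_schur_compl_le n (A : 'M[R]_(1 + n)) :
  posdef A -> ulsubmx A 0 0 + \tr (schur_compl A) <= \tr A.
Proof.
move=> hA; have [sA _] := hA; have a0 := posdef_ulsubmx_gt0 hA.
have Ec : dlsubmx A = (ursubmx A)^T by rewrite trmx_ursub sA.
rewrite -[X in _ <= \tr X]submxK mxtrace_block trace_mx11 lerD2l.
rewrite /schur_compl linearB /= -scalemxAr mxtraceZ mxtrace_mulC Ec trace_mx11.
rewrite gerBl mulr_ge0 ?invr_ge0 ?(ltW a0) // mulmx_trmx00.
by rewrite sumr_ge0 // => i _; rewrite sqr_ge0.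
Qed.

End PosDef.

Lemma posdef_det_amgm (R : realType) (m : nat) (A : 'M[R]_m) :
  posdef A -> 0 < \det A /\ ln (\det A) <= m%:R * ln (\tr A / m%:R).
Proof.
elim: m A => [|m IH] A hA; first by rewrite det_mx00 ln1 mul0r ltr01 lexx.
have a0 := posdef_ulsubmx_gt0 hA; have hS := posdef_schur_compl hA.
have trA := mxtrace_schur_compl_le hA.
have [dS lS] := IH _ hS.
rewrite (det_schur_compl (lt0r_neq0 a0)); split; first exact: mulr_gt0.
rewrite [X in X <= _]lnM ?posrE //.
set a := ulsubmx _ 0 0 in a0 trA *; set S := schur_compl _ in hS trA dS lS *.
have [m0|m0] := posnP m.
  have trS : \tr S = 0.
    by rewrite /mxtrace big1 // => i; move: (ltn_ord i); rewrite [X in (_ < X)%N]m0.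
  have -> : m.+1%:R = 1 :> R by rewrite m0.
  have m0R : m%:R = 0 :> R by rewrite m0.
  rewrite m0R mul0r in lS; rewrite trS addr0 in trA; rewrite divr1 mul1r.
  apply: (@le_trans _ _ (ln a)); first by rewrite gerDl.
  by rewrite ler_ln ?posrE // (lt_le_trans a0 trA).
have tS := posdef_mxtrace_gt0 m0 hS.
apply: (@le_trans _ _ (ln a + m%:R * ln (\tr S / m%:R))); first by rewrite lerD2l.
apply: le_trans (ln_amgm a0 tS m0) _.
rewrite ler_pM2l ?ltr0n // ler_ln ?posrE ?divr_gt0 ?ltr0n ?addr_gt0 //.
  by rewrite ler_pM2r // invr_gt0 ltr0n.
by apply: lt_le_trans trA; rewrite addr_gt0.
Qed.

Lemma dotvE (R : realType) n (u v : 'rV[R]_n) : dotv u v = (u *m v^T) 0 0.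
Proof. by rewrite mxE; apply: eq_bigr => i _; rewrite mxE. Qed.

Lemma dotv_sum_scale (R : realType) n N (u : 'rV[R]_n) (c : 'I_N -> R)
    (xs : 'I_N -> 'rV[R]_n) :
  dotv u (\sum_k c k *: xs k) = \sum_k c k * dotv u (xs k).
Proof.
rewrite dotvE raddf_sum /= mulmx_sumr summxE; apply: eq_bigr => k _.
by rewrite linearZ /= -scalemxAr scalemxE dotvE.
Qed.

Lemma norm1_ge0 (R : realType) n (u : 'rV[R]_n) : 0 <= norm1 u.
Proof. by rewrite sumr_ge0. Qed.

Lemma sumr_sqr_le_norm1 (R : realType) n (u : 'rV[R]_n) :
  \sum_i u 0 i ^+ 2 <= norm1 u ^+ 2.
Proof.
apply: le_trans (sumr_sqr_le _) => //.
by apply: ler_sum => i _; rewrite real_normK ?num_real.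
Qed.

Lemma norm1_sum_scale_le (R : realType) n N (c : 'I_N -> R) (xs : 'I_N -> 'rV[R]_n) :
  (forall k, `|c k| <= 1) -> norm1 (\sum_k c k *: xs k) <= \sum_k norm1 (xs k).
Proof.
move=> hc; rewrite /norm1 exchange_big /=; apply: ler_sum => i _.
rewrite summxE; apply: le_trans (ler_norm_sum _ _ _) _.
apply: ler_sum => k _; rewrite scalemxE normrM.
by rewrite ler_piMl.
Qed.

Lemma normr_sg_le1 (R : numDomainType) (a : R) : `|Num.sg a| <= 1.
Proof. by rewrite normr_sg; case: (a != 0). Qed.

(** * The elliptical potential lemma *)

Definition gram (R : pzRingType) n (mu : R) (y : nat -> 'rV[R]_n) (t : nat) :=
  mu%:M + \sum_(j < t) (y j)^T *m y j.

Section Gram.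
Variables (R : realType) (n : nat) (mu : R) (y : nat -> 'rV[R]_n).
Hypothesis mu_gt0 : 0 < mu.

Lemma gram0 : gram mu y 0 = mu%:M.
Proof. by rewrite /gram big_ord0 addr0. Qed.

Lemma gramS t : gram mu y t.+1 = gram mu y t + (y t)^T *m y t.
Proof. by rewrite /gram big_ord_recr addrA. Qed.

Lemma gram_form t (u : 'rV[R]_n) :
  (u *m gram mu y t *m u^T) 0 0 =
  mu * \sum_i u 0 i ^+ 2 + \sum_(j < t) (u *m (y j)^T) 0 0 ^+ 2.
Proof.
elim: t => [|t IH]; first by rewrite gram0 mul_mx_scalar -scalemxAl scalemxE
  mulmx_trmx00 big_ord0 addr0.
by rewrite gramS mulmxDr mulmxDl addmxE IH form_rank1 big_ord_recr addrA.
Qed.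

Lemma gram_posdef t : posdef (gram mu y t).
Proof.
elim: t => [|t IH]; last by rewrite gramS; apply: posdef_add_rank1.
rewrite gram0; split; first exact: tr_scalar_mx.
move=> u u0; rewrite mul_mx_scalar -scalemxAl scalemxE mulmx_trmx00.
rewrite mulr_gt0 // lt_neqAle sumr_ge0 ?andbT => [|i _]; last exact: sqr_ge0.
apply: contra u0 => /eqP/esym/psumr_eq0P u0; apply/eqP/rowP => i.
by rewrite mxE; apply/eqP; rewrite -sqrf_eq0 u0 // => j _; rewrite sqr_ge0.
Qed.

Lemma gram_mxtrace t :
  \tr (gram mu y t) = mu * n%:R + \sum_(j < t) \sum_i y j 0 i ^+ 2.
Proof.
rewrite /gram mxtraceD mxtrace_scalar mulr_natr raddf_sum /=; congr (_ + _).
by apply: eq_bigr => j _; rewrite mxtrace_mulC /mxtrace big_ord1 mulmx_trmx00.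
Qed.

Lemma invform_le_ln_det (V : 'M[R]_n) (z : 'rV[R]_n) : posdef V ->
  (z *m invmx (V + z^T *m z) *m z^T) 0 0 <=
  ln (\det (V + z^T *m z)) - ln (\det V).
Proof.
move=> hV; set A := V + z^T *m z.
have hA : posdef A by exact: posdef_add_rank1.
have [dA _] := posdef_det_amgm hA; have [dV _] := posdef_det_amgm hV.
set q := (z *m invmx A *m z^T) 0 0.
have e : \det V / \det A = 1 - q.
  have -> : V = A + (- z^T) *m z by rewrite /A mulNmx addrK.
  rewrite det_addmul ?posdef_unitmx // mulmxN oppmxE.
  by rewrite mulrAC mulfV ?lt0r_neq0 // mul1r.
have := ln_le_subr1 (divr_gt0 dV dA); rewrite ln_div ?posrE // e; lra.
Qed.

Lemma sum_invform_le_ln_det t :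
  \sum_(k < t) (y k *m invmx (gram mu y k.+1) *m (y k)^T) 0 0 <=
  ln (\det (gram mu y t)) - ln (\det (gram mu y 0)).
Proof.
elim: t => [|t IH]; first by rewrite big_ord0 subrr.
rewrite big_ord_recr /=.
have := invform_le_ln_det (y t) (gram_posdef t); rewrite -gramS.
move: IH; set s := \sum_(_ < _) _; lra.
Qed.

Lemma elliptical_potential t : (0 < n)%N ->
  \sum_(k < t) (y k *m invmx (gram mu y k.+1) *m (y k)^T) 0 0 <=
  n%:R * ln (1 + (\sum_(j < t) \sum_i y j 0 i ^+ 2) / (n%:R * mu)).
Proof.
move=> n0; apply: le_trans (sum_invform_le_ln_det t) _.
have [_] := posdef_det_amgm (gram_posdef t).
rewrite gram0 det_scalar lnXn // gram_mxtrace.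
set T := \sum_(_ < _) _.
have T0 : 0 <= T by rewrite !sumr_ge0 // => j _; rewrite sumr_ge0 // => i _; exact: sqr_ge0.
have nR : 0 < n%:R :> R by rewrite ltr0n.
have -> : 1 + T / (n%:R * mu) = (mu * n%:R + T) / n%:R / mu.
  by field; rewrite !lt0r_neq0.
have x0 : 0 < mu * n%:R + T by rewrite ltr_pwDl ?mulr_gt0.
move=> h; rewrite [ln (_ / mu)]ln_div ?posrE ?divr_gt0 // mulrBr [n%:R * ln mu]mulr_natl.
lra.
Qed.

End Gram.

Section Proposition5.
Variables (R : realType) (d K L M N : nat).
Variables (w : 'I_K -> 'I_L -> 'I_M -> 'rV[R]_d) (x : 'I_K -> 'I_L -> 'I_N -> 'rV[R]_d).
Variables (beta Gw Gx lambda : R).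
Hypotheses (Gw_gt0 : 0 < Gw) (lambda_gt0 : 0 < lambda).
Hypothesis hbeta : forall k : 'I_K,
  \sum_(j < K | (j <= k)%N)
     (\sum_(l < L) \sum_(m < M) \sum_(n < N) `|dotv (w k l m) (x j l n)|) ^+ 2
  <= beta.
Hypothesis hw : forall k : 'I_K, \sum_(l < L) \sum_(m < M) norm1 (w k l m) <= Gw.
Hypothesis hx : forall k : 'I_K, \sum_(l < L) \sum_(n < N) norm1 (x k l n) <= Gx.

Let mu := lambda / Gw ^+ 2.

Let mu_gt0 : 0 < mu. Proof. by rewrite divr_gt0 ?exprn_gt0. Qed.

Definition signed_sum l m (j : nat) : 'rV[R]_d :=
  if insub j is Some k then
    \sum_(n < N) Num.sg (dotv (w k l m) (x k l n)) *: x k l n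
  else 0.

Lemma signed_sumE (k : 'I_K) l m :
  signed_sum l m k = \sum_n Num.sg (dotv (w k l m) (x k l n)) *: x k l n.
Proof. by rewrite /signed_sum valK. Qed.

Let V l m := gram mu (signed_sum l m).
Let B k l m := (w k l m *m V l m k.+1 *m (w k l m)^T) 0 0.
Let q (k : 'I_K) l m :=
  (signed_sum l m k *m invmx (V l m k.+1) *m (signed_sum l m k)^T) 0 0.

Lemma sum_abs_dotv_le_sqrt (k : 'I_K) l m :
  \sum_n `|dotv (w k l m) (x k l n)| <= Num.sqrt (B k l m) * Num.sqrt (q k l m).
Proof.
have hV := gram_posdef (signed_sum l m) mu_gt0 k.+1.
rewrite -sqrtrM ?posdef_form_ge0 //; apply: ler_sqrtr_sqr; first exact: sumr_ge0.
have -> : \sum_n `|dotv (w k l m) (x k l n)| =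
          (w k l m *m (signed_sum l m k)^T) 0 0.
  rewrite -dotvE signed_sumE dotv_sum_scale.
  by apply: eq_bigr => n _; rewrite normrEsg.
exact: posdef_dot_sqr_le.
Qed.

Lemma sum_reg_le (k : 'I_K) : \sum_l \sum_m mu * \sum_i w k l m 0 i ^+ 2 <= lambda.
Proof.
rewrite (eq_bigr (fun l => mu * \sum_m \sum_i w k l m 0 i ^+ 2)); last first.
  by move=> l _; rewrite mulr_sumr.
have -> : lambda = mu * Gw ^+ 2 by rewrite divfK ?expf_neq0 ?lt0r_neq0.
rewrite -mulr_sumr ler_pM2l //.
apply: (@le_trans _ _ (\sum_l \sum_m norm1 (w k l m) ^+ 2)).
  by apply: ler_sum => l _; apply: ler_sum => m _; apply: sumr_sqr_le_norm1.
apply: le_trans (sumr_sqr_le2 (fun l m => norm1_ge0 (w k l m))) _.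
have S0 : 0 <= \sum_l \sum_m norm1 (w k l m).
  by apply: sumr_ge0 => l _; apply: sumr_ge0 => m _; apply: norm1_ge0.
by apply: lerXn2r; rewrite ?nnegrE ?(le_trans S0 (hw k)) ?hw.
Qed.

Lemma sum_data_le (k : 'I_K) :
  \sum_l \sum_m \sum_(j < k.+1) (w k l m *m (signed_sum l m j)^T) 0 0 ^+ 2 <= beta.
Proof.
pose P (j : 'I_K) l m := \sum_n `|dotv (w k l m) (x j l n)|.
have hP (j : 'I_K) l m : (w k l m *m (signed_sum l m j)^T) 0 0 ^+ 2 <= P j l m ^+ 2.
  rewrite -dotvE signed_sumE dotv_sum_scale -real_normK ?num_real //.
  apply: lerXn2r; rewrite ?nnegrE ?normr_ge0 //; first by apply: sumr_ge0 => n _.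
  apply: le_trans (ler_norm_sum _ _ _) _; apply: ler_sum => n _.
  by rewrite normrM ler_piMl ?normr_sg_le1.
apply: le_trans (hbeta k).
rewrite (eq_bigr (fun l => \sum_(j < k.+1) \sum_m
            (w k l m *m (signed_sum l m j)^T) 0 0 ^+ 2)); last first.
  by move=> l _; rewrite exchange_big.
rewrite exchange_big /= (big_ord_widen K (fun j : nat => \sum_l \sum_m
  (w k l m *m (signed_sum l m j)^T) 0 0 ^+ 2) (ltn_ord k)); apply: ler_sum => j _.
apply: (@le_trans _ _ (\sum_l \sum_m P j l m ^+ 2)).
  by apply: ler_sum => l _; apply: ler_sum => m _; apply: hP.
by apply: sumr_sqr_le2 => l m; apply: sumr_ge0.
Qed.

Lemma sum_gram_form_le (k : 'I_K) : \sum_l \sum_m B k l m <= lambda + beta.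
Proof.
rewrite /B /V; under eq_bigr do under eq_bigr do rewrite gram_form.
under eq_bigr do rewrite big_split /=; rewrite big_split /=.
exact: lerD (sum_reg_le k) (sum_data_le k).
Qed.

Let T l := \sum_(k < K) (\sum_(n < N) norm1 (x k l n)) ^+ 2.

Lemma sum_invform_le l m : (0 < d)%N ->
  \sum_k q k l m <= d%:R * ln (1 + T l / (d%:R * mu)).
Proof.
move=> d0; apply: le_trans (elliptical_potential (signed_sum l m) mu_gt0 K d0) _.
have hT : \sum_(j < K) \sum_i signed_sum l m j 0 i ^+ 2 <= T l.
  apply: ler_sum => j _; apply: le_trans (sumr_sqr_le_norm1 _) _.
  apply: lerXn2r; rewrite ?nnegrE ?norm1_ge0 //.
    by apply: sumr_ge0 => n _; apply: norm1_ge0.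
  by rewrite signed_sumE norm1_sum_scale_le // => n; apply: normr_sg_le1.
have S0 : 0 <= \sum_(j < K) \sum_i signed_sum l m j 0 i ^+ 2.
  by rewrite sumr_ge0 // => j _; rewrite sumr_ge0 // => i _; apply: sqr_ge0.
have dmu : 0 < d%:R * mu by rewrite mulr_gt0 ?ltr0n.
rewrite ler_pM2l ?ltr0n // ler_ln ?posrE ?ltr_pwDl ?divr_ge0 ?(ltW dmu) //.
- by rewrite lerD2l ler_pM2r ?invr_gt0.
- exact: le_trans hT.
Qed.

Lemma sum_T_le : \sum_l T l <= K%:R * Gx ^+ 2.
Proof.
have -> : K%:R * Gx ^+ 2 = \sum_(k < K) Gx ^+ 2 by rewrite sumr_const card_ord mulr_natl.
rewrite /T exchange_big /=; apply: ler_sum => k _.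
have n0 l : 0 <= \sum_n norm1 (x k l n) by rewrite sumr_ge0 // => n _; apply: norm1_ge0.
apply: le_trans (sumr_sqr_le n0) _.
have S0 : 0 <= \sum_l \sum_n norm1 (x k l n) by apply: sumr_ge0 => l _.
by apply: lerXn2r; rewrite ?nnegrE ?(le_trans S0 (hx k)) ?hx.
Qed.

Lemma sum_invform_total_le : (0 < d)%N -> (0 < L)%N -> (0 < M)%N ->
  \sum_k \sum_l \sum_m q k l m <= (M * d * L)%:R *
    ln (1 + (M%:R * Gw ^+ 2 * Gx ^+ 2 * K%:R) / (d%:R * L%:R * lambda)).
Proof.
move=> d0 L0 M0.
have LR : 0 < L%:R :> R by rewrite ltr0n.
have dmu : 0 < d%:R * mu by rewrite mulr_gt0 ?ltr0n.
have T0 l : 0 <= T l / (d%:R * mu).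
  by rewrite divr_ge0 ?(ltW dmu) // sumr_ge0 // => k _; apply: sqr_ge0.
set a := K%:R * Gx ^+ 2 / (d%:R * mu) / L%:R.
have a0 : 0 <= a by rewrite /a !divr_ge0 ?(ltW dmu) ?(ltW LR) // mulr_ge0 ?ler0n ?sqr_ge0.
have -> : M%:R * Gw ^+ 2 * Gx ^+ 2 * K%:R / (d%:R * L%:R * lambda) = M%:R * a.
  by rewrite /a /mu; field; rewrite !lt0r_neq0 ?exprn_gt0 ?ltr0n.
rewrite exchange_big /=; under eq_bigr do rewrite exchange_big /=.
apply: le_trans (ler_sum _ (fun l _ => ler_sum _ (fun m _ => sum_invform_le l m d0))) _.
rewrite (eq_bigr (fun l => M%:R * (d%:R * ln (1 + T l / (d%:R * mu))))); last first.
  by move=> l _; rewrite sumr_const card_ord (mulr_natl _ M).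
rewrite -!mulr_sumr !natrM -!mulrA !ler_pM2l ?ltr0n //.
apply: le_trans (sum_ln1D_le L0 T0) _.
rewrite ler_pM2l // ler_ln ?posrE; last 2 first.
- by rewrite ltr_pwDl // divr_ge0 ?sumr_ge0 // ltW.
- by rewrite ltr_pwDl // mulr_ge0.
rewrite lerD2l -mulr_suml; apply: (@le_trans _ _ a); last by rewrite ler_peMl ?ler1n.
by rewrite /a !ler_pM2r ?invr_gt0 // sum_T_le.
Qed.

Lemma sum_abs_dotv_bound : (0 < d)%N -> (0 < L)%N -> (0 < M)%N ->
  \sum_k \sum_l \sum_m \sum_n `|dotv (w k l m) (x k l n)|
  <= Num.sqrt ((lambda + beta) * (d * L * M * K)%:R *
       ln (1 + (M%:R * Gw ^+ 2 * Gx ^+ 2 * K%:R) / (d%:R * L%:R * lambda))).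
Proof.
move=> d0 L0 M0.
have B0 k l m : 0 <= B k l m by apply/posdef_form_ge0/gram_posdef.
have q0 k l m : 0 <= q k l m by apply/posdef_invmx_form_ge0/gram_posdef.
have HB : \sum_k \sum_l \sum_m B k l m <= K%:R * (lambda + beta).
  have -> : K%:R * (lambda + beta) = \sum_(k < K) (lambda + beta).
    by rewrite sumr_const card_ord mulr_natl.
  by apply: ler_sum => k _; apply: sum_gram_form_le.
have HBq : \sum_k \sum_l \sum_m \sum_n `|dotv (w k l m) (x k l n)| <=
    Num.sqrt (\sum_k \sum_l \sum_m B k l m) * Num.sqrt (\sum_k \sum_l \sum_m q k l m).
  apply: sumr_le_sqrtrM => k; last 2 first.
  - by apply: sumr_ge0 => l _; apply: sumr_ge0 => m _.
  - by apply: sumr_ge0 => l _; apply: sumr_ge0 => m _.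
  apply: sumr_le_sqrtrM => l; last 2 first.
  - exact: sumr_ge0.
  - exact: sumr_ge0.
  exact: sumr_le_sqrtrM (sum_abs_dotv_le_sqrt k l) (B0 k l) (q0 k l).
apply: le_trans HBq _; set lnZ := ln _.
have B_ge0 : 0 <= \sum_k \sum_l \sum_m B k l m.
  by apply: sumr_ge0 => k _; apply: sumr_ge0 => l _; apply: sumr_ge0.
have -> : (lambda + beta) * (d * L * M * K)%:R * lnZ =
          K%:R * (lambda + beta) * ((M * d * L)%:R * lnZ) by rewrite !natrM; ring.
rewrite sqrtrM; last exact: le_trans B_ge0 HB.
apply: ler_pM; rewrite ?sqrtr_ge0 //; apply: ler_wsqrtr; first exact: HB.
exact: sum_invform_total_le.
Qed.

End Proposition5.

Unset Implicit Arguments. Set Strict Implicit.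

Theorem proposition5 (R : realType) (d K L M N : nat)
  (w : 'I_K -> 'I_L -> 'I_M -> 'rV[R]_d)
  (x : 'I_K -> 'I_L -> 'I_N -> 'rV[R]_d)
  (beta Gw Gx : R) (hGw : 0 < Gw) (hGx : 0 < Gx)
  (hbeta : forall k : 'I_K,
     \sum_(j < K | (j <= k)%N)
        (\sum_(l < L) \sum_(m < M) \sum_(n < N) `|dotv (w k l m) (x j l n)|) ^+ 2
     <= beta)
  (hw : forall k : 'I_K, \sum_(l < L) \sum_(m < M) norm1 (w k l m) <= Gw)
  (hx : forall k : 'I_K, \sum_(l < L) \sum_(n < N) norm1 (x k l n) <= Gx)
  (lambda : R) (hlambda : 0 < lambda) :
  \sum_(k < K) \sum_(l < L) \sum_(m < M) \sum_(n < N) `|dotv (w k l m) (x k l n)|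
  <= Num.sqrt ((lambda + beta) * (d * L * M * K)%:R *
       ln (1 + (M%:R * Gw ^+ 2 * Gx ^+ 2 * K%:R) / (d%:R * L%:R * lambda))).
Proof.
have [d0|d_gt0] := posnP d.
  subst d; rewrite big1 ?sqrtr_ge0 // => k _; rewrite big1 // => l _.
  by rewrite big1 // => m _; rewrite big1 // => n _; rewrite /dotv big_ord0 normr0.
have [L0|L_gt0] := posnP L.
  by subst L; rewrite big1 ?sqrtr_ge0 // => k _; rewrite big_ord0.
have [M0|M_gt0] := posnP M.
  by subst M; rewrite big1 ?sqrtr_ge0 // => k _; rewrite big1 // => l _; rewrite big_ord0.
exact: sum_abs_dotv_bound hGw hlambda hbeta hw hx d_gt0 L_gt0 M_gt0.
Qed.
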